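(* In the single-authority continuum model described in the context, fix a state $\omega$. An allocation $\mu$ is implemented by a quota policy if and only if it is also implemented by a monotone priority policy.
   Context: An authority allocates a resource of measure $q\in(0,1)$ to a continuum of agents with types $\theta=(s,m)\in[0,1]\times\mathcal M$ ($\mathcal M$ finite), whose measure in state $\omega$ has a density $f_\omega$. Allocations are measurable $\mu:\Theta\to\{0,1\}$ (equality of allocations understood up to measure zero). A priority policy $P$ assigns each type $(s,m)$ a priority $P(s,m)$; the priority mechanism allocates the resource in order of priorities until measure $q$ is allocated, ties broken uniformly at random. $P$ is monotone if $P(s,m)$ is strictly increasing in $s$ for each $m$. A quota policy $(Q,D)$ reserves measure $Q_m$ for group $m$, with $Q_R=q-\sum_mQ_m$ open to all, and a bijection (precedence order) $D:\mathcal M\cup\{R\}\to\{1,\dots,|\mathcal M|+1\}$; the quota mechanism allocates measure $Q_{D^{-1}(k)}$ to agents of group $D^{-1}(k)$ (to all agents if $D^{-1}(k)=R$) in ascending order of $k$, in descending order of score within each round; if there are too few agents of a group to fill its quota, the residual capacity is allocated in a final round open to all. *)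

From HB Require Import structures.
From mathcomp Require Import all_boot all_order all_algebra.
From mathcomp Require Import all_classical all_reals all_analysis.
Set Implicit Arguments. Unset Strict Implicit. Unset Printing Implicit Defensive.
Import Order.TTheory GRing.Theory Num.Theory.
Local Open Scope classical_set_scope.
Local Open Scope ring_scope.

Section Model.
Variables (R : realType) (M : finType).

Definition Theta : set (R * M) := [set th | 0 <= th.1 <= 1].

(* Measure of a set of types under the (fixed-state) density f. *)
Definition mass (f : R -> M -> R) (S : set (R * M)) : \bar R :=
  (\sum_(m : M) \int[lebesgue_measure]_(s in [set s : R | (0 <= s <= 1)%R /\ S (s, m)])
      (f s m)%:E)%E.

Definition total_mass (f : R -> M -> R) : \bar R := mass f Theta.

(* phi th = probability that type th receives the resource when the
   resource is allocated in order of priorities P until measure q is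
   allocated, ties broken uniformly at random. *)
Definition priority_outcome (f : R -> M -> R) (q : R) (P : R * M -> R)
    (phi : R * M -> R) : Prop :=
  [/\ (forall th, Theta th -> 0 <= phi th <= 1),
      (* uniform random tie-breaking: equal priority, equal chance *)
      (forall th th', Theta th -> Theta th' -> P th = P th' -> phi th = phi th'),
      (* allocation in order of priorities *)
      (forall th th', Theta th -> Theta th' -> P th' < P th -> 0 < phi th' ->
          phi th = 1) &
      (* measure q is allocated (or everybody, if fewer than q agents) *)
      (\sum_(m : M) \int[lebesgue_measure]_(s in `[0%R, 1%R]) (phi (s, m) * f s m)%R%:E)%E
         = mine q%:E (total_mass f)].

Definition priority_implements (f : R -> M -> R) (q : R) (P : R * M -> R)
    (mu : R * M -> bool) : Prop :=
  exists phi, priority_outcome f q P phi /\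
    mass f [set th | Theta th /\ phi th <> (mu th)%:R] = 0%E.

Definition monotone_priority (P : R * M -> R) : Prop :=
  forall m s s', 0 <= s -> s < s' -> s' <= 1 -> P (s, m) < P (s', m).

(* None stands for the open category R. *)
Definition in_group (o : option M) (th : R * M) : Prop :=
  match o with None => True | Some m => th.2 = m end.

Definition capacity (q : R) (Q : M -> R) (o : option M) : R :=
  match o with None => q - \sum_(m : M) Q m | Some m => Q m end.

Definition quota_policy (q : R) (Q : M -> R) : Prop :=
  (forall m, 0 <= Q m) /\ \sum_(m : M) Q m <= q.

(* One round: measure x is allocated to the agents of pool, in descending
   order of score (or all of pool if it has measure less than x). *)
Definition round (f : R -> M -> R) (pool : set (R * M)) (x : \bar R)
    (B : set (R * M)) : Prop :=
  [/\ B `<=` pool,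
      (forall b r, B b -> pool r -> ~ B r -> r.1 <= b.1) &
      mass f B = mine x (mass f pool)].

(* A run of the quota mechanism with precedence order D: A k is the set of
   agents allocated before round k (rounds 0, ..., #|M|), res k the residual
   capacity accumulated so far; Bfin is allocated in the final open round. *)
Definition quota_run (f : R -> M -> R) (q : R) (Q : M -> R)
    (D : option M -> 'I_(#|M|.+1)) (A : nat -> set (R * M))
    (res : nat -> \bar R) (Bfin : set (R * M)) : Prop :=
  [/\ A 0%N = set0, res 0%N = 0%E,
      (forall (k : 'I_(#|M|.+1)) (o : option M), D o = k ->
         exists B, [/\ round f [set th | Theta th /\ ~ A k th /\ in_group o th]
                               (capacity q Q o)%:E B,
                       A k.+1 = A k `|` B &
                       res k.+1 = (res k + (capacity q Q o)%:E - mass f B)%E]) &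
      round f [set th | Theta th /\ ~ A #|M|.+1 th] (res #|M|.+1) Bfin].

Definition quota_implements (f : R -> M -> R) (q : R) (Q : M -> R)
    (D : option M -> 'I_(#|M|.+1)) (mu : R * M -> bool) : Prop :=
  exists A res Bfin, quota_run f q Q D A res Bfin /\
    mass f [set th | Theta th /\ ~ ((A #|M|.+1 `|` Bfin) th <-> mu th)] = 0%E.

End Model.

From HB Require Import structures.
From mathcomp Require Import all_boot all_order all_algebra.
From mathcomp Require Import all_classical all_reals all_analysis.
From mathcomp Require Import measurable_realfun lra.
Set Implicit Arguments. Unset Strict Implicit. Unset Printing Implicit Defensive.
Import Order.TTheory GRing.Theory Num.Theory.
Local Open Scope classical_set_scope.
Local Open Scope ring_scope.

(* Both mechanisms are described by the same object: a set U of types that is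
   upper closed in the score within each group and has measure min(q, total).

   A quota run allocates, in every round, an upper segment of the remaining
   agents of one group (or of all agents), so the allocated set stays upper
   closed from round to round; keeping track of the residual capacity shows that
   it has measure min(q, total). Ranking U above its complement, and by score
   inside each part, is a monotone priority policy implementing U.

   Conversely, under a monotone priority policy a type served with positive
   probability forces every better-scored type of its group to be served for
   sure, so the types served for sure form an upper closed set V. Within a group
   at most one score is served with a probability strictly between 0 and 1, so V
   has measure min(q, total). Reserving for each group its part of V, with the
   open category last, is a quota policy implementing V; the open round then has
   nothing left to allocate. *)

(* Unlike [ge0_le_integral], no measurability is needed: [mass] is defined on
   arbitrary sets of types. *)
Lemma ge0_le_integral_patch (d : measure_display) (T : measurableType d)
    (R : realType) (mu : {measure set T -> \bar R}) (D1 D2 : set T)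
    (g h : T -> \bar R) :
  (forall x, (0 <= (g \_ D1) x)%E) -> (forall x, ((g \_ D1) x <= (h \_ D2) x)%E) ->
  (\int[mu]_(x in D1) g x <= \int[mu]_(x in D2) h x)%E.
Proof.
move=> g_ge0 gh; have h_ge0 x := le_trans (g_ge0 x) (gh x).
rewrite ge0_integralE => [|x D1x]; last by have := g_ge0 x; rewrite patchT ?inE.
rewrite ge0_integralE => [|x D2x]; last by have := h_ge0 x; rewrite patchT ?inE.
apply: ereal_sup_le => _ [k /= k_le <-]; exists k => //= x.
exact: le_trans (k_le x) (gh x).
Qed.

Lemma big_option (V : nmodType) (I : finType) (F : option I -> V) :
  \sum_(o : option I) F o = F None + \sum_(i : I) F (Some i).
Proof.
rewrite (bigD1 None) //=; congr (_ + _).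
rewrite (reindex_omap Some id) //=; last by case.
by apply: eq_bigl => i; rewrite eqxx.
Qed.

Lemma big_rank_ltS (V : nmodType) (I : finType) (n : nat) (D : I -> 'I_n)
    (F : I -> V) (i : I) :
  injective D ->
  \sum_(j | (D j < (D i).+1)%N) F j = \sum_(j | (D j < D i)%N) F j + F i.
Proof.
move=> D_inj; rewrite (bigD1 i) ?ltnSn //= addrC; congr (_ + _).
apply: eq_bigl => j; rewrite ltnS leq_eqVlt.
have [->|ne_ji] := eqVneq j i; first by rewrite eqxx andbF ltnn.
by rewrite val_eqE (inj_eq D_inj) (negbTE ne_ji) andbT.
Qed.

Definition open_last (M : finType) (o : option M) : 'I_#|M|.+1 :=
  if o is Some m then widen_ord (leqnSn _) (enum_rank m) else ord_max.

Lemma open_last_bij (M : finType) : bijective (@open_last M).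
Proof.
pose g (k : 'I_#|M|.+1) :=
  if insub (val k) : option 'I_#|M| is Some i then Some (enum_val i) else None.
exists g => [[m|]|k]; rewrite /g /=.
- by rewrite (valK (enum_rank m)) enum_rankK.
- by rewrite insubF // ltnn.
case: insubP => [i _ k_i|k_ge] /=; apply: val_inj => /=; first by rewrite enum_valK.
by apply/eqP; rewrite eqn_leq leqNgt k_ge -ltnS ltn_ord.
Qed.

Lemma min_residual_eq0 (R : realDomainType) (q v p : R) :
  0 <= p -> v = Num.min q (v + p) -> Num.min (q - v) p = 0.
Proof.
move=> p_ge0; have [q_le|q_gt] := leP q (v + p) => [->|v_eq].
  by rewrite subrr min_l.
have -> : p = 0 by lra.
by rewrite min_r // subr_ge0; lra.
Qed.

Lemma indic_cases (T : Type) (R : pzRingType) (A : set T) (x : T) :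
  (\1_A x = 1 :> R /\ A x) \/ (\1_A x = 0 :> R /\ ~ A x).
Proof.
have [Ax|nAx] := pselect (A x); [left|right]; split => //.
- by rewrite indicE mem_set.
- by rewrite indicE memNset.
Qed.

Lemma indic_in (T : Type) (R : pzRingType) (A : set T) (x : T) :
  A x -> \1_A x = 1 :> R.
Proof. by move=> Ax; rewrite indicE mem_set. Qed.

Lemma indic_eq_nat (T : Type) (R : nzRingType) (A : set T) (x : T) (b : bool) :
  \1_A x = b%:R :> R <-> (A x <-> b).
Proof.
case: (indic_cases R A x) => -[-> Ax]; case: b => /=.
- by split=> // _; split.
- by split=> [/eqP|[/(_ Ax)]]; rewrite ?oner_eq0.
- by split=> [/eqP|[_ /(_ isT) /Ax]]; rewrite // eq_sym oner_eq0.
- by split=> // _; split=> // /Ax.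
Qed.

Section Allocation.
Variables (R : realType) (M : finType) (f : R -> M -> R).
Hypothesis f_ge0 : forall s m, 0 <= s <= 1 -> 0 <= f s m.
Hypothesis f_int :
  forall m, lebesgue_measure.-integrable `[0, 1] (fun s => (f s m)%:E).

Local Notation Th := (@Theta R M).
Local Open Scope ereal_scope.

Definition slice (S : set (R * M)) (m : M) :=
  [set s : R | (0 <= s <= 1)%R /\ S (s, m)].

Lemma massE S :
  mass f S = \sum_(m : M) \int[lebesgue_measure]_(s in slice S m) (f s m)%:E.
Proof. by []. Qed.

Lemma slice_sub {S m} : slice S m `<=` `[0%R, 1%R].
Proof. by move=> s [s01 _]; rewrite /= in_itv. Qed.

Lemma integral_f_ge0 m (X : set R) :
  X `<=` `[0%R, 1%R] -> 0 <= \int[lebesgue_measure]_(s in X) (f s m)%:E.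
Proof.
by move=> X01; apply: integral_ge0 => s /X01; rewrite /= in_itv lee_fin => /f_ge0.
Qed.

Lemma le_integral_f m (X Y : set R) : X `<=` Y -> Y `<=` `[0%R, 1%R] ->
  \int[lebesgue_measure]_(s in X) (f s m)%:E <=
  \int[lebesgue_measure]_(s in Y) (f s m)%:E.
Proof.
have f_ge0' s : [set` `[0%R, 1%R]] s -> 0 <= (f s m)%:E.
  by rewrite /= in_itv lee_fin => /f_ge0.
move=> XY Y01; apply: ge0_le_integral_patch => s; rewrite /patch.
  by case: ifPn => // /set_mem /XY /Y01 /f_ge0'.
case: ifPn => [/set_mem Xs|_]; first by rewrite mem_set //; apply: XY.
by case: ifPn => // /set_mem /Y01 /f_ge0'.
Qed.

Lemma integral_f_fin_num m (X : set R) : X `<=` `[0%R, 1%R] ->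
  \int[lebesgue_measure]_(s in X) (f s m)%:E \is a fin_num.
Proof.
move=> X01; rewrite ge0_fin_numE ?integral_f_ge0 //.
apply: le_lt_trans (le_integral_f m X01 (@subset_refl _ _)) _.
by rewrite -ge0_fin_numE ?integral_f_ge0 //; apply: integrable_fin_num.
Qed.

Lemma mass_ge0 S : 0 <= mass f S.
Proof. by apply: sume_ge0 => m _; apply/integral_f_ge0/slice_sub. Qed.

Lemma mass_fin_num S : mass f S \is a fin_num.
Proof. by apply/sum_fin_numP => m _ _; apply/integral_f_fin_num/slice_sub. Qed.

Lemma le_mass S1 S2 : S1 `&` Th `<=` S2 -> mass f S1 <= mass f S2.
Proof.
move=> S12; rewrite !massE; apply: lee_sum => m _.
have S12m : slice S1 m `<=` slice S2 m by move=> s [s01 S1s]; split => //; apply: S12.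
exact (le_integral_f m S12m slice_sub).
Qed.

Lemma mass_set0 : mass f set0 = 0.
Proof.
rewrite massE big1 // => m _.
suff -> : slice set0 m = set0 by exact: integral_set0.
by apply/seteqP; split => s [] // _ [].
Qed.

Lemma mass_group S m : mass f [set th | S th /\ th.2 = m] =
  \int[lebesgue_measure]_(s in slice S m) (f s m)%:E.
Proof.
rewrite massE (bigD1 m) //= big1 ?adde0 => [|m' m'_neq].
  by congr integral; apply/seteqP; split => s [s01 Ss]; split => //; case: Ss.
have -> : slice [set th | S th /\ th.2 = m] m' = set0.
  by apply/seteqP; split => s // [_ [_ /= m'_eq]]; rewrite m'_eq eqxx in m'_neq.
exact: integral_set0.
Qed.

Lemma sum_mass_group S : \sum_(m : M) mass f [set th | S th /\ th.2 = m] = mass f S.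
Proof. by apply: eq_bigr => m _; rewrite mass_group. Qed.

Lemma mass_setU S1 S2 :
  (forall m, measurable (slice S1 m)) -> (forall m, measurable (slice S2 m)) ->
  [disjoint S1 & S2] -> mass f (S1 `|` S2) = mass f S1 + mass f S2.
Proof.
move=> S1_meas S2_meas /disj_setPS S12; rewrite !massE -big_split /=.
apply: eq_bigr => m _.
have -> : slice (S1 `|` S2) m = slice S1 m `|` slice S2 m.
  apply/seteqP; split => s.
  - by move=> [s01 [S1s|S2s]]; [left|right].
  - by move=> [[s01 S1s]|[s01 S2s]]; split => //; [left|right].
have S12m : [disjoint slice S1 m & slice S2 m].
  by apply/disj_setPS => s [[_ S1s] [_ S2s]]; apply: (S12 (s, m)).
rewrite ge0_integral_setU //.
- exact: S1_meas.
- exact: S2_meas.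
- apply: measurable_funS (measurable_int _ (f_int m)) => //.
  by move=> s [] /slice_sub.
- by move=> s [[s01 _]|[s01 _]]; rewrite lee_fin f_ge0.
Qed.

Definition upper_closed (S : set (R * M)) :=
  forall m s s', S (s, m) -> (s < s')%R -> (s' <= 1)%R -> S (s', m).

Lemma upper_closed_Theta : upper_closed Th.
Proof.
move=> m s s' /andP[/= s_ge0 _] ss' s'_le1; rewrite /Theta /= s'_le1 andbT.
exact: le_trans s_ge0 (ltW ss').
Qed.

Lemma measurable_slice_upper S m : upper_closed S -> measurable (slice S m).
Proof.
move=> S_up; apply: is_interval_measurable => x y [x01 Sx] [y01 Sy] z /andP[xz zy].
have z01 : (0 <= z <= 1)%R.
  case/andP: x01 => x_ge0 _; case/andP: y01 => _ y_le1.
  by rewrite (le_trans x_ge0 xz) (le_trans zy y_le1).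
split => //; have [<- //|xz_neq] := eqVneq x z.
by apply: S_up Sx _ _; [rewrite lt_neqAle xz_neq | case/andP: z01].
Qed.

Lemma mass_setU_upper S1 S2 : upper_closed S1 -> upper_closed (S1 `|` S2) ->
  [disjoint S1 & S2] -> mass f (S1 `|` S2) = mass f S1 + mass f S2.
Proof.
move=> S1_up S12_up S12; apply: mass_setU (S12) => m.
  exact: measurable_slice_upper.
have -> : slice S2 m = slice (S1 `|` S2) m `\` slice S1 m.
  apply/seteqP; split => s.
  - move=> [s01 S2s]; split; first by split => //; right.
    by move=> [_ S1s]; move/disj_setPS: S12; apply; split; [exact: S1s|exact: S2s].
  - by move=> [[s01 [S1s|S2s]] nS1s] //; case: nS1s.
by apply: measurableD; apply: measurable_slice_upper.
Qed.

Lemma total_massE A : upper_closed A -> A `<=` Th ->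
  total_mass f = mass f A + mass f [set th | Th th /\ ~ A th].
Proof.
move=> A_up A_Th.
have ThE : Th = A `|` [set th | Th th /\ ~ A th].
  apply/seteqP; split => [th Th_th|th [/A_Th|[]]] //.
  by have [Ath|nAth] := pselect (A th); [left|right].
rewrite /total_mass {1}ThE mass_setU_upper -?ThE //; first exact: upper_closed_Theta.
by apply/disj_setPS => th [Ath [_ nAth]].
Qed.

Lemma upper_closed_round A pool x B :
  upper_closed A -> pool `<=` [set th | Th th /\ ~ A th] ->
  (forall th th', pool th -> Th th' -> th'.2 = th.2 -> ~ A th' -> pool th') ->
  round f pool x B -> upper_closed (A `|` B).
Proof.
move=> A_up pool_sub pool_group [B_sub B_top _] m s s' [As|Bs] ss' s'_le1.
  by left; exact: A_up As ss' s'_le1.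
have [As'|nAs'] := pselect (A (s', m)); [by left | right].
have pool_s := B_sub _ Bs; have [Th_s _] := pool_sub _ pool_s.
have Th_s' := upper_closed_Theta Th_s ss' s'_le1.
have pool_s' := pool_group _ (s', m) pool_s Th_s' erefl nAs'.
apply: contrapT => nBs'.
by have := B_top _ _ Bs pool_s' nBs'; rewrite /= leNgt ss'.
Qed.

Section QuotaRun.
Variables (q : R) (Q : M -> R) (D : option M -> 'I_#|M|.+1).
Variables (A : nat -> set (R * M)) (res : nat -> \bar R) (Bfin : set (R * M)).
Hypotheses (D_bij : bijective D) (run : quota_run f q Q D A res Bfin).

Let pool k o := [set th | Th th /\ ~ A k th /\ in_group o th].
Let capacity_before k := (\sum_(o | (D o < k)%N) capacity q Q o)%R.

Lemma pool_group k o th th' :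
  pool k o th -> Th th' -> th'.2 = th.2 -> ~ A k th' -> pool k o th'.
Proof.
by case: o => [m|] [_ [_ th_m]] Th_th' th'_th nAth'; do 2!split => //=; rewrite th'_th.
Qed.

Lemma quota_run_step (k : 'I_#|M|.+1) : exists o B,
  [/\ D o = k, round f (pool k o) (capacity q Q o)%:E B, A k.+1 = A k `|` B &
      res k.+1 = res k + (capacity q Q o)%:E - mass f B].
Proof.
have [g _ gK] := D_bij; have [_ _ rounds _] := run.
by have [B [? ? ?]] := rounds k (g k) (gK k); exists (g k), B.
Qed.

Lemma quota_run_upper k : (k <= #|M|.+1)%N -> upper_closed (A k) /\ A k `<=` Th.
Proof.
elim: k => [_|k IHk lt_k]; first by have [-> _ _ _] := run; split => // m s s' [].
have [A_up A_Th] := IHk (ltnW lt_k).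
have [c [B [_ rB AkS _]]] := quota_run_step (Ordinal lt_k).
have [B_sub _ _] := rB; rewrite AkS; split.
  apply: upper_closed_round A_up _ (@pool_group k c) rB.
  by move=> th [Th_th [nAth _]].
by move=> th [/A_Th|/B_sub []].
Qed.

Lemma quota_run_residual k : (k <= #|M|.+1)%N ->
  res k = (capacity_before k - fine (mass f (A k)))%:E.
Proof.
elim: k => [_|k IHk lt_k].
  by have [-> -> _ _] := run; rewrite mass_set0 /capacity_before big_pred0 // subr0.
have [c [B [Do rB AkS resS]]] := quota_run_step (Ordinal lt_k).
have [Ak_up _] := quota_run_upper (ltnW lt_k).
have [AkS_up _] := quota_run_upper lt_k.
have [B_sub _ _] := rB.
have capacity_beforeS : capacity_before k.+1 = (capacity_before k + capacity q Q c)%R.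
  rewrite /capacity_before -[k]/(nat_of_ord (Ordinal lt_k)) -Do big_rank_ltS //.
  exact: bij_inj.
rewrite resS IHk ?(ltnW lt_k) // -(fineK (mass_fin_num B)) AkS.
rewrite mass_setU_upper -?AkS //; last by apply/disj_setPS => th [Ath /B_sub [_ []]].
by rewrite fineD ?mass_fin_num // capacity_beforeS -EFinD; congr EFin => /=; lra.
Qed.

Lemma quota_run_allocation :
  upper_closed (A #|M|.+1 `|` Bfin) /\
  mass f (A #|M|.+1 `|` Bfin) = mine q%:E (total_mass f).
Proof.
have [A_up A_Th] := quota_run_upper (leqnn _).
have [_ _ _ final] := run; have [Bfin_sub _ Bfin_mass] := final.
have U_up : upper_closed (A #|M|.+1 `|` Bfin).
  apply: upper_closed_round A_up (@subset_refl _ _) _ final.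
  by move=> th th' _ Th_th' _ nAth'.
split => //.
have capacity_before_all : capacity_before #|M|.+1 = q.
  rewrite /capacity_before (eq_bigl xpredT) => [|o]; last by rewrite ltn_ord.
  by rewrite big_option /= subrK.
rewrite mass_setU_upper //; last by apply/disj_setPS => th [Ath /Bfin_sub [_]].
rewrite Bfin_mass quota_run_residual // capacity_before_all (total_massE A_up A_Th).
rewrite -[mass f (A _)](fineK (mass_fin_num _)) /=.
rewrite -[mass f [set th | _ /\ _]](fineK (mass_fin_num _)) -!EFin_min -EFinD.
by congr EFin; rewrite addr_minr; congr Num.min; lra.
Qed.

End QuotaRun.


Section PriorityOfSet.
Variables (q : R) (U : set (R * M)).
Hypotheses (U_up : upper_closed U) (U_mass : mass f U = mine q%:E (total_mass f)).

Definition priority_of_set (th : R * M) : R := th.1 + 2 * \1_U th.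

Lemma monotone_priority_of_set : monotone_priority priority_of_set.
Proof.
move=> m s s' _ ss' s'_le1; rewrite /priority_of_set /=.
case: (indic_cases R U (s, m)) => -[-> Us].
  by rewrite (indic_in _ (U_up Us ss' s'_le1)); lra.
by case: (indic_cases R U (s', m)) => -[-> _]; lra.
Qed.

Lemma priority_outcome_of_set : priority_outcome f q priority_of_set \1_U.
Proof.
rewrite /priority_of_set; split.
- by move=> th _; case: (indic_cases R U th) => -[-> _]; rewrite ?lexx ?ler01.
- move=> th th' /andP[th_ge0 th_le1] /andP[th'_ge0 th'_le1].
  by case: (indic_cases R U th) => -[-> _]; case: (indic_cases R U th') => -[-> _]; lra.
- move=> th th' /andP[th_ge0 th_le1] /andP[th'_ge0 th'_le1].
  by case: (indic_cases R U th) => -[-> _]; case: (indic_cases R U th') => -[-> _]; lra.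
rewrite -U_mass massE; apply: eq_bigr => m _.
rewrite integral_mkcond [RHS]integral_mkcond; apply: eq_integral => s _.
rewrite /patch; have [s01|s_out] := boolP (s \in [set` `[0%R, 1%R]]).
  have s01' : (0 <= s <= 1)%R by move/set_mem: s01; rewrite /= in_itv.
  case: (indic_cases R U (s, m)) => -[-> Us]; first by rewrite mul1r mem_set.
  by rewrite mul0r memNset // => -[].
rewrite memNset // => -[s01 _].
by move/negP: s_out; apply; apply/mem_set; rewrite /= in_itv.
Qed.

Lemma priority_implements_of_set (mu : R * M -> bool) :
  mass f [set th | Th th /\ ~ (U th <-> mu th)] = 0 ->
  exists P, monotone_priority P /\ priority_implements f q P mu.
Proof.
move=> U_mu; exists priority_of_set; split; first exact: monotone_priority_of_set.
exists \1_U; split; first exact: priority_outcome_of_set.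
rewrite -U_mu; congr (mass f _); apply/seteqP.
by split=> th [Th_th U_mu_th]; split=> //; move/(indic_eq_nat R)/U_mu_th.
Qed.

End PriorityOfSet.

Section PriorityServed.
Variables (q : R) (P : R * M -> R) (phi : R * M -> R).
Hypotheses (P_mono : monotone_priority P) (phi_out : priority_outcome f q P phi).

Let served := [set th | Th th /\ phi th = 1%R].
Let served_pos := [set th | Th th /\ (0 < phi th)%R].

Lemma priority_serves_above m s s' : Th (s, m) -> (0 < phi (s, m))%R ->
  (s < s')%R -> (s' <= 1)%R -> phi (s', m) = 1%R.
Proof.
move=> Th_s phi_s ss' s'_le1; have [_ _ order _] := phi_out.
apply: (order _ (s, m)) => //; first exact: upper_closed_Theta Th_s ss' s'_le1.
by apply: P_mono => //; case/andP: Th_s.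
Qed.

Lemma upper_closed_served : upper_closed served.
Proof.
move=> m s s' [Th_s phi_s] ss' s'_le1.
split; first exact: upper_closed_Theta Th_s ss' s'_le1.
by apply: priority_serves_above Th_s _ ss' s'_le1; rewrite phi_s ltr01.
Qed.

Lemma upper_closed_served_pos : upper_closed served_pos.
Proof.
move=> m s s' [Th_s phi_s] ss' s'_le1.
split; first exact: upper_closed_Theta Th_s ss' s'_le1.
by rewrite (priority_serves_above Th_s phi_s ss' s'_le1) ltr01.
Qed.

Lemma mass_partly_served : mass f (served_pos `\` served) = 0.
Proof.
rewrite massE big1 // => m _.
have [[s0 partial_s0]|none] := pselect (exists s, slice (served_pos `\` served) m s).
  apply: (integral_Sset1 s0) => s partial_s; apply/eqP; rewrite eq_le !leNgt.
  case: partial_s0 => _ [[Th_s0 pos_s0] nserved_s0].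
  case: partial_s => _ [[Th_s pos_s] nserved_s].
  apply/andP; split; apply/negP => lt.
  - apply: nserved_s; split => //.
    by apply: priority_serves_above Th_s0 pos_s0 lt _; case/andP: Th_s.
  - apply: nserved_s0; split => //.
    by apply: priority_serves_above Th_s pos_s lt _; case/andP: Th_s0.
suff -> : slice (served_pos `\` served) m = set0 by exact: integral_set0.
by apply/seteqP; split => s // partial_s; apply: none; exists s.
Qed.

Lemma mass_served_pos : mass f served_pos = mass f served.
Proof.
have served_sub : served `<=` served_pos.
  by move=> th [Th_th phi_th]; split; rewrite // phi_th ltr01.
rewrite -(setDUK served_sub) mass_setU_upper ?setDUK ?mass_partly_served ?adde0 //.
- exact: upper_closed_served.
- exact: upper_closed_served_pos.
- by apply/disj_setPS => th [served_th [_]].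
Qed.

Let outcome_mass :=
  \sum_(m : M) \int[lebesgue_measure]_(s in `[0%R, 1%R]) (phi (s, m) * f s m)%:E.

Lemma mass_served_le_outcome : mass f served <= outcome_mass.
Proof.
have [phi01 _ _ _] := phi_out.
apply: lee_sum => m _; apply: ge0_le_integral_patch => s; rewrite /patch.
  by case: ifPn => // /set_mem [/f_ge0]; rewrite lee_fin.
case: ifPn => [/set_mem [s01 [_ ->]]|_].
  by rewrite mul1r mem_set //= in_itv.
case: ifPn => // /set_mem; rewrite /= in_itv => s01.
by rewrite lee_fin mulr_ge0 ?f_ge0 //; case/andP: (phi01 (s, m) s01).
Qed.

Lemma outcome_le_mass_served_pos : outcome_mass <= mass f served_pos.
Proof.
have [phi01 _ _ _] := phi_out.
apply: lee_sum => m _; apply: ge0_le_integral_patch => s; rewrite /patch.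
  case: ifPn => // /set_mem; rewrite /= in_itv => s01.
  by rewrite lee_fin mulr_ge0 ?f_ge0 //; case/andP: (phi01 (s, m) s01).
case: ifPn => [/set_mem|_]; last first.
  by case: ifPn => // /set_mem [/f_ge0]; rewrite lee_fin.
rewrite /= in_itv => s01; have /andP[phi_ge0 phi_le1] := phi01 (s, m) s01.
have [phi_le0|phi_gt0] := lerP (phi (s, m)) 0%R.
  rewrite (_ : phi (s, m) = 0%R) ?mul0r; last by apply/eqP; rewrite eq_le phi_le0.
  by case: ifPn => // /set_mem [/f_ge0]; rewrite lee_fin.
rewrite mem_set; last by split => //; split.
by rewrite lee_fin ler_piMl ?f_ge0.
Qed.

Lemma mass_served : mass f served = mine q%:E (total_mass f).
Proof.
have [_ _ _ <-] := phi_out.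
apply/eqP; rewrite eq_le; apply/andP; split; first exact: mass_served_le_outcome.
by rewrite -mass_served_pos; exact: outcome_le_mass_served_pos.
Qed.

Lemma served_agrees (mu : R * M -> bool) :
  mass f [set th | Th th /\ phi th <> (mu th)%:R] = 0 ->
  mass f [set th | Th th /\ ~ (served th <-> mu th)] = 0.
Proof.
move=> phi_mu; apply/eqP; rewrite eq_le mass_ge0 andbT -phi_mu; apply: le_mass.
move=> th [[Th_th served_mu] _]; split => // phi_eq; apply: served_mu.
case: (mu th) phi_eq => /= phi_eq; split => //.
by case=> _; rewrite phi_eq => /eqP; rewrite eq_sym oner_eq0.
Qed.

End PriorityServed.

Section QuotaOfSet.
Variables (q : R) (V : set (R * M)).
Hypotheses (V_up : upper_closed V) (V_Th : V `<=` Th).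
Hypothesis V_mass : mass f V = mine q%:E (total_mass f).

Let V_group m := [set th | V th /\ th.2 = m].
Let unserved := [set th | Th th /\ ~ V th].
Let before k := [set th | V th /\ (enum_rank th.2 < k)%N].

Definition group_quota (m : M) : R := fine (mass f (V_group m)).

Let residual k := if (k <= #|M|)%N then 0 else (capacity q group_quota None)%:E.

Lemma group_quotaE m : (group_quota m)%:E = mass f (V_group m).
Proof. by rewrite fineK ?mass_fin_num. Qed.

Lemma sum_group_quota : (\sum_(m : M) group_quota m)%:E = mass f V.
Proof.
rewrite -sumEFin -[RHS]sum_mass_group.
by apply: eq_bigr => m _; rewrite group_quotaE.
Qed.

Lemma quota_policy_group_quota : quota_policy q group_quota.
Proof.
split => [m|]; first exact/fine_ge0/mass_ge0.
by rewrite -lee_fin sum_group_quota V_mass ge_min lexx.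
Qed.

Lemma open_round_empty : mine (capacity q group_quota None)%:E (mass f unserved) = 0.
Proof.
have sumQ : (\sum_(m : M) group_quota m)%R = fine (mass f V) by rewrite -sum_group_quota.
have p_ge0 := fine_ge0 (mass_ge0 unserved).
have v_eq :
    (fine (mass f V) = Num.min q (fine (mass f V) + fine (mass f unserved)))%R.
  apply: EFin_inj; rewrite EFin_min EFinD !fineK ?mass_fin_num //.
  by rewrite -(total_massE V_up V_Th).
rewrite /= sumQ -(fineK (mass_fin_num unserved)) -EFin_min.
by rewrite (min_residual_eq0 p_ge0 v_eq).
Qed.

Lemma before_all k : (#|M| <= k)%N -> before k = V.
Proof.
move=> k_ge; apply/seteqP; split => [th []//|th Vth]; split => //.
exact: leq_trans (ltn_ord _) k_ge.
Qed.

Lemma before_succ m : before (enum_rank m).+1 = before (enum_rank m) `|` V_group m.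
Proof.
apply/seteqP; split => [[s m']|[s m']] /=.
- move=> [Vth]; rewrite ltnS leq_eqVlt => /orP[/eqP rank_eq|lt]; [right|left] => //.
  by split => //=; apply: enum_rank_inj; apply: val_inj.
- by move=> [[Vth lt]|[Vth /= <-]]; split => //=; apply: leqW.
Qed.

Lemma group_round m :
  round f [set th | Th th /\ ~ before (enum_rank m) th /\ in_group (Some m) th]
    (capacity q group_quota (Some m))%:E (V_group m).
Proof.
have V_group_pool : V_group m `<=`
    [set th | Th th /\ ~ before (enum_rank m) th /\ in_group (Some m) th].
  by move=> [s m'] [Vth /= <-]; split; [exact: V_Th | split => // -[_]; rewrite ltnn].
split => //.
- move=> [sb mb] [sr mr] [Vb /= <-] [Th_r [_ /= mr_mb]] nVr.
  rewrite leNgt; apply/negP => lt.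
  by apply: nVr; split => //; rewrite mr_mb; apply: V_up Vb lt _; case/andP: Th_r.
- rewrite /= -group_quotaE min_l // group_quotaE; apply: le_mass.
  by move=> th [V_group_th _]; exact: V_group_pool.
Qed.

Lemma quota_run_group_quota :
  quota_run f q group_quota (@open_last M) before residual set0.
Proof.
have open_pool k : (#|M| <= k)%N ->
    [set th | Th th /\ ~ before k th /\ in_group None th] = unserved.
  move=> k_ge; rewrite before_all //; apply/seteqP; split => th.
  - by case=> Th_th [nVth _].
  - by case=> Th_th nVth.
split.
- by apply/seteqP; split => th // [_]; rewrite ltn0.
- by rewrite /residual.
- move=> k [m|] <-.
  + exists (V_group m); split; first exact: group_round; first exact: before_succ.
    rewrite /residual /= ltn_ord ltnW ?ltn_ord // -group_quotaE add0e subee //.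
  + exists set0; split; last by rewrite /residual /= ltnn leqnn mass_set0 add0e sube0.
    * by split => [? []|b r []|]; rewrite mass_set0 open_pool // open_round_empty.
    * by rewrite setU0 !before_all.
split => [? []|b r []|].
by rewrite mass_set0 /residual ltnn before_all // open_round_empty.
Qed.

Lemma quota_implements_of_set (mu : R * M -> bool) :
  mass f [set th | Th th /\ ~ (V th <-> mu th)] = 0 ->
  exists Q D, [/\ quota_policy q Q, bijective D & quota_implements f q Q D mu].
Proof.
move=> V_mu; exists group_quota, (@open_last M); split.
- exact: quota_policy_group_quota.
- exact: open_last_bij.
exists before, residual, set0; split; first exact: quota_run_group_quota.
by rewrite setU0 before_all.
Qed.

End QuotaOfSet.

End Allocation.

Theorem proposition13 (R : realType) (M : finType) (f : R -> M -> R) (q : R)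
    (mu : R * M -> bool) :
  (forall s m, 0 <= s <= 1 -> 0 <= f s m) ->
  (forall m, lebesgue_measure.-integrable `[0, 1] (fun s => (f s m)%:E)) ->
  0 < q < 1 ->
  (forall m, measurable [set s : R | mu (s, m)]) ->
  (exists (Q : M -> R) (D : option M -> 'I_(#|M|.+1)),
      [/\ quota_policy q Q, bijective D & quota_implements f q Q D mu])
  <->
  (exists P : R * M -> R, monotone_priority P /\ priority_implements f q P mu).
Proof.
move=> f_ge0 f_int _ _; split.
- move=> [Q [D [_ D_bij [A [res [Bfin [run U_mu]]]]]]].
  have [U_up U_mass] := quota_run_allocation f_ge0 f_int D_bij run.
  exact: priority_implements_of_set U_up U_mass _ U_mu.
- move=> [P [P_mono [phi [phi_out phi_mu]]]].
  apply: (quota_implements_of_set f_ge0 f_int (upper_closed_served P_mono phi_out)).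
  + by move=> th [].
  + exact (mass_served f_ge0 f_int P_mono phi_out).
  + exact (served_agrees f_ge0 phi_mu).
Qed.
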